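(* Let $x\in A$ with $x>1$, and let $y$ be the largest element of $A$ that is less than $x$. Let $n\ge 1$, let $P_x$ be the position of $\mathrm{AGG}(n,A)$ with one cell containing a tile of value $x$ and $n-1$ empty cells, and define $P_y$ similarly. Then $P_x$ is reachable in $\mathrm{AGG}(n,A)$ if and only if both of the following hold: (1) $P_y$ is reachable in $\mathrm{AGG}(n,A)$; (2) some position of total value exactly $x-y$ is reachable in $\mathrm{AGG}(n-1,A)$.
   Context: Let $A$ be a set of positive integers with $1\in A$ (the allowed tile values). For an integer $n\ge 0$, the abstract generalized 2048 game $\mathrm{AGG}(n,A)$ is played on $n$ indistinguishable cells. A position assigns to each cell either nothing (the cell is empty) or a tile carrying a value in $A$. The initial position has all cells empty. A step, which can be performed from any position having at least one empty cell, consists of: (i) placing a new tile of value $1$ into a chosen empty cell; then (ii) optionally choosing any collection of pairwise disjoint sets of nonempty cells such that the sum of the tile values in each chosen set belongs to $A$, and merging each chosen set into a single tile, whose value is that sum, placed in one cell of the set, the other cells of the set becoming empty. The game ends when, after a step, all cells are nonempty (no further step is then possible). A position is reachable if it can be obtained from the initial position by a finite sequence of steps. The total value of a position is the sum of the values of its tiles. ($\mathrm{AGG}(0,A)$ has only the empty position, of total value $0$.) *)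

From mathcomp Require Import all_boot.
Set Implicit Arguments. Unset Strict Implicit. Unset Printing Implicit Defensive.

(* Since cells are indistinguishable, a position of AGG(n,A) is represented by
   the list of the values of its nonempty cells (order irrelevant; positions
   are compared up to permutation).  The number of empty cells is
   n - size p.  The set A of allowed values is a predicate on nat. *)

(* One step (requires an empty cell, i.e. size p < n): add a tile 1, then
   partition the tiles into blocks; every block of size >= 2 is a chosen set
   merged into one tile of value its sum (which must lie in A); singleton
   blocks are untouched tiles. *)
Definition agg_step (n : nat) (A : pred nat) (p q : seq nat) : Prop :=
  size p < n /\
  exists bs : seq (seq nat),
    [/\ perm_eq (flatten bs) (1 :: p),
        all (fun b => b != [::]) bs,
        all (fun b => (1 < size b) ==> A (sumn b)) bs &
        perm_eq q (map sumn bs)].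

Inductive agg_reachable (n : nat) (A : pred nat) : seq nat -> Prop :=
| agg_reach_init : agg_reachable n A [::]
| agg_reach_step p q : agg_reachable n A p -> agg_step n A p q ->
    agg_reachable n A q.

Definition total_value (p : seq nat) : nat := sumn p.

From mathcomp Require Import all_boot zify.

Set Implicit Arguments. Unset Strict Implicit. Unset Printing Implicit Defensive.

(* Reachable totals are downward closed (stop one step earlier), and a reachable
   position whose total lies in A can merge everything in its last step; this
   gives P_y from P_x.  Conversely, a play of AGG(n-1,A) runs unchanged beside a
   tile y, and its last step can merge everything into y + (x - y) = x.
   For the remaining implication, follow the tile v into which the first tile
   of a play has been merged: the other tiles are always coarsenings of a
   position of AGG(n-1,A) with an empty cell.  Just before P_x we have v <= y,
   so AGG(n-1,A) reaches every total up to (x - 1 - v) + 1 >= x - y. *)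

Section PermMap.
Variables (T U : eqType) (f : T -> U).

Lemma perm_map_inv s t :
  perm_eq (map f s) t -> exists2 s', perm_eq s s' & map f s' = t.
Proof.
elim: t s => [|y t IHt] s eq_st.
  by exists s => //; apply/size0nil; rewrite (perm_size eq_st).
have : y \in map f s by rewrite (perm_mem eq_st) mem_head.
case/mapP=> a s_a y_fa; rewrite {y}y_fa in eq_st *.
have eq_s_rem := perm_to_rem s_a.
have [s' eq_rem_s' <-] : exists2 s', perm_eq (rem a s) s' & map f s' = t.
  apply: IHt; rewrite -(perm_cons (f a)) -/(map f (a :: rem a s)).
  by apply: perm_trans eq_st; rewrite perm_sym perm_map.
by exists (a :: s'); rewrite // (perm_trans eq_s_rem) ?perm_cons.
Qed.

Lemma perm_map_catP s X Y : perm_eq (map f s) (X ++ Y) ->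
  exists s1 s2, [/\ perm_eq s (s1 ++ s2), map f s1 = X & map f s2 = Y].
Proof.
case/perm_map_inv=> s' eq_ss' map_s'.
exists (take (size X) s'), (drop (size X) s'); rewrite cat_take_drop.
by rewrite map_take map_drop map_s' take_size_cat // drop_size_cat.
Qed.

End PermMap.

Lemma perm_cons_catP (T : eqType) (a : T) s R D : perm_eq (a :: s) (R ++ D) ->
  perm_eq s (rem a R ++ D) \/ a \in D /\ perm_eq s (R ++ rem a D).
Proof.
move=> eq_as; have [R_a | R'a] := boolP (a \in R).
  left; rewrite -(perm_cons a) (perm_trans eq_as) //.
  by rewrite -cat_cons perm_cat2r perm_to_rem.
have : a \in R ++ D by rewrite -(perm_mem eq_as) mem_head.
rewrite mem_cat (negbTE R'a) /= => D_a.
right; split=> //; rewrite -(perm_cons a) (perm_trans eq_as) //.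
by rewrite -cat1s perm_sym perm_catCA perm_cat2l perm_sym perm_to_rem.
Qed.

Section Merges.
Variable A : pred nat.

Definition valid_block (b : seq nat) : bool :=
  (b != [::]) && ((1 < size b) ==> A (sumn b)).

Definition merges (p q : seq nat) : Prop :=
  exists bs, [/\ all valid_block bs, perm_eq (flatten bs) p & perm_eq (map sumn bs) q].

Lemma agg_stepE n p q : agg_step n A p q <-> size p < n /\ merges (1 :: p) q.
Proof.
rewrite /agg_step /merges; split=> -[lt_pn [bs bs_def]]; split=> //.
  case: bs_def => eq_bs ne_bs A_bs eq_q; exists bs; split=> //; last by rewrite perm_sym.
  by apply/allP=> b bs_b; rewrite /valid_block (allP ne_bs) ?(allP A_bs).
case: bs_def => valid_bs eq_bs eq_q; exists bs; split=> //; last by rewrite perm_sym.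
  by apply/allP=> b /(allP valid_bs)/andP[].
by apply/allP=> b /(allP valid_bs)/andP[].
Qed.

Lemma merges_perm p p' q q' :
  perm_eq p p' -> perm_eq q q' -> merges p q -> merges p' q'.
Proof.
move=> eq_p eq_q [bs [valid_bs eq_bs eq_bsq]].
by exists bs; rewrite valid_bs (perm_trans eq_bs) ?(perm_trans eq_bsq).
Qed.

Lemma merges_flatten bs : all valid_block bs -> merges (flatten bs) (map sumn bs).
Proof. by exists bs. Qed.

Lemma merges_cat p1 q1 p2 q2 :
  merges p1 q1 -> merges p2 q2 -> merges (p1 ++ p2) (q1 ++ q2).
Proof.
move=> [bs1 [valid1 eq_p1 eq_q1]] [bs2 [valid2 eq_p2 eq_q2]].
by exists (bs1 ++ bs2); rewrite all_cat valid1 valid2 flatten_cat map_cat !perm_cat.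
Qed.

Lemma merges_refl p : merges p p.
Proof.
elim: p => [|a p IHp]; first by exists [::].
by apply: (@merges_cat [:: a] [:: a]) IHp; exists [:: [:: a]]; rewrite /= addn0.
Qed.

Lemma merges_sumn p q : merges p q -> sumn q = sumn p.
Proof.
by case=> bs [_ eq_p eq_q]; rewrite -(perm_sumn eq_q) -sumn_flatten (perm_sumn eq_p).
Qed.

Lemma merges_size p q : merges p q -> size q <= size p.
Proof.
case=> bs [valid_bs eq_p eq_q]; rewrite -(perm_size eq_q) -(perm_size eq_p) size_map.
elim: bs valid_bs {eq_p eq_q} => //= b bs IHbs /andP[/andP[ne_b _] /IHbs].
by rewrite size_cat -add1n; apply: leq_add; rewrite lt0n size_eq0.
Qed.

Lemma merges_one b : valid_block b -> merges b [:: sumn b].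
Proof. by exists [:: b]; rewrite /= andbT cats0. Qed.

Lemma valid_block_flatten gs :
  all valid_block gs -> valid_block (map sumn gs) -> valid_block (flatten gs).
Proof.
case: gs => [|g [|g' gs]] //=; first by rewrite cats0 andbT.
move=> /andP[/andP[ne_g _] _] /andP[_ /= A_sum].
rewrite /valid_block -[g ++ _]/(flatten [:: g, g' & gs]) sumn_flatten A_sum implybT.
by case: g ne_g {A_sum}.
Qed.

Lemma merges_blocks gs bs :
    all valid_block gs -> all valid_block bs -> perm_eq (flatten bs) (map sumn gs) ->
  merges (flatten gs) (map sumn bs).
Proof.
elim: bs gs => [|b bs IHbs] gs valid_gs /=.
  by move=> _; rewrite perm_sym => /perm_nilP; case: gs {valid_gs} => // _; apply: merges_refl.
case/andP=> valid_b valid_bs; rewrite perm_sym.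
case/perm_map_catP=> gs1 [gs2 [eq_gs def_b eq_bs]]; subst b.
have /andP[valid_gs1 valid_gs2] : all valid_block gs1 && all valid_block gs2.
  by rewrite -all_cat -(perm_all _ eq_gs).
have eq_flat : perm_eq (flatten (gs1 ++ gs2)) (flatten gs) by rewrite perm_sym perm_flatten.
apply: merges_perm eq_flat (perm_refl _) _.
rewrite flatten_cat -cat1s; apply: merges_cat; last by apply: IHbs; rewrite ?eq_bs.
by rewrite -sumn_flatten; apply: merges_one; apply: valid_block_flatten.
Qed.

Lemma merges_trans p q r : merges p q -> merges q r -> merges p r.
Proof.
case=> gs [valid_gs eq_gs eq_q] [bs [valid_bs eq_bs eq_r]].
apply: merges_perm eq_gs eq_r _; apply: merges_blocks => //.
by rewrite (perm_trans eq_bs) // perm_sym.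
Qed.

Lemma merges_all p q : all A p -> merges p q -> all A q.
Proof.
move=> A_p [bs [valid_bs eq_p eq_q]]; rewrite -(perm_all _ eq_q).
apply/allP=> _ /mapP[b bs_b ->]; have /andP[ne_b A_b] := allP valid_bs b bs_b.
case: b ne_b A_b bs_b => [//|t [|t' b]] _ //= _ bs_t; rewrite addn0.
apply: (allP A_p); rewrite -(perm_mem eq_p); apply/flattenP.
by exists [:: t]; rewrite ?mem_head.
Qed.

End Merges.

Section Reachable.
Variables (n : nat) (A : pred nat).

Lemma agg_reachable_inv q : agg_reachable n A q -> q != [::] ->
  exists2 p, agg_reachable n A p & agg_step n A p q.
Proof. by case=> [|p q' reach_p step_pq] //; exists p. Qed.

Lemma agg_step_sumn p q : agg_step n A p q -> sumn q = (sumn p).+1.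
Proof. by case/agg_stepE=> _ /merges_sumn. Qed.

Lemma agg_step_add1 p : size p < n -> agg_step n A p (1 :: p).
Proof. by move=> lt_pn; apply/agg_stepE; split; last exact: merges_refl. Qed.

Lemma agg_reachable_sumn_le q k : agg_reachable n A q -> k <= sumn q ->
  exists2 q', agg_reachable n A q' & sumn q' = k.
Proof.
elim: q / => [|p q reach_p IHp step_pq].
  by rewrite leqn0 => /eqP->; exists [::]; first exact: agg_reach_init.
rewrite (agg_step_sumn step_pq) leq_eqVlt ltnS => /predU1P[-> | /IHp //].
by exists q; [apply: agg_reach_step step_pq | rewrite (agg_step_sumn step_pq)].
Qed.

Lemma agg_reachable_all q : A 1 -> agg_reachable n A q -> all A q.
Proof.
move=> A1; elim=> [//|p {}q _ A_p /agg_stepE[_]].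
by apply: merges_all; rewrite /= A1.
Qed.

Lemma agg_reachable_merge_all q : agg_reachable n A q -> 0 < sumn q -> A (sumn q) ->
  agg_reachable n A [:: sumn q].
Proof.
move=> reach_q sumn_gt0 A_q; have ne_q : q != [::] by case: q sumn_gt0 {reach_q A_q}.
have [p reach_p /agg_stepE[lt_pn merge_pq]] := agg_reachable_inv reach_q ne_q.
apply: agg_reach_step reach_p _; apply/agg_stepE; split=> //.
by apply: merges_trans merge_pq _; apply: merges_one; rewrite /valid_block ne_q A_q implybT.
Qed.

End Reachable.

Lemma agg_step_cons n A y p q : agg_step n.-1 A p q -> agg_step n A (y :: p) (y :: q).
Proof.
case/agg_stepE=> lt_pn merge_pq; apply/agg_stepE; split; first by rewrite /=; lia.
have swap_y1 : perm_eq [:: y, 1 & p] [:: 1, y & p] by rewrite (perm_catCA [:: y] [:: 1]).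
exact: merges_perm swap_y1 (perm_refl _) (merges_cat (merges_refl A [:: y]) merge_pq).
Qed.

Lemma agg_reachable_cons n A y p :
  agg_reachable n A [:: y] -> agg_reachable n.-1 A p -> agg_reachable n A (y :: p).
Proof.
move=> reach_y; elim=> [//|p' q _ reach_yp' /(agg_step_cons y)].
exact: agg_reach_step.
Qed.

Definition coarse_reachable m A (B : seq nat) : Prop :=
  exists Q, [/\ agg_reachable m A Q, size Q < m & merges A Q B].

Lemma coarse_reachable_merges m A S B :
  coarse_reachable m A S -> merges A S B -> coarse_reachable m A B.
Proof.
by case=> Q [reach_Q lt_Qm merge_QS] merge_SB; exists Q; split=> //; apply: merges_trans merge_SB.
Qed.

Lemma coarse_reachable_add1 m A S B :
  coarse_reachable m A S -> merges A (1 :: S) B -> size B < m -> coarse_reachable m A B.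
Proof.
case=> Q [reach_Q lt_Qm merge_QS] merge_SB lt_Bm; exists B; split=> //; last exact: merges_refl.
apply: agg_reach_step reach_Q _; apply/agg_stepE; split=> //.
exact: merges_trans (merges_cat (merges_refl A [:: 1]) merge_QS) merge_SB.
Qed.

(* [v] is the tile into which the first tile ever placed has been merged; all
   other tiles of the position are simulated on [n.-1] cells. *)
Definition first_tile_split n A (q : seq nat) : Prop :=
  exists v rest, perm_eq q (v :: rest) /\
    forall R B, perm_eq rest (R ++ B) -> coarse_reachable n.-1 A B.

Lemma first_tile_split1 n A : 1 < n -> first_tile_split n A [:: 1].
Proof.
move=> lt1n; exists 1, [::]; split=> // R B /perm_size/esym/eqP.
rewrite size_cat addn_eq0 !size_eq0 => /andP[_ /eqP->]; exists [::].
by split; [apply: agg_reach_init | rewrite -subn1 subn_gt0 | apply: merges_refl].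
Qed.

Lemma first_tile_split_step n A p q :
  first_tile_split n A p -> merges A (1 :: p) q -> size q < n -> first_tile_split n A q.
Proof.
move=> [v [rest [eq_p sim_rest]]] [bs [valid_bs eq_bs eq_q]] lt_qn.
have /flattenP[b0 bs_b0 b0_v] : v \in flatten bs.
  by rewrite (perm_mem eq_bs) inE (perm_mem eq_p) mem_head orbT.
have eq_bs_b0 := perm_to_rem bs_b0.
exists (sumn b0), (map sumn (rem b0 bs)); split.
  by rewrite perm_sym in eq_q; apply: perm_trans eq_q (perm_map sumn eq_bs_b0).
move=> R' B' /perm_map_catP[bsR [bsB [eq_rem _ <-]]].
have eq_bs_split : perm_eq bs (b0 :: bsR ++ bsB) by rewrite (perm_trans eq_bs_b0) ?perm_cons.
have /andP[_ valid_bsB] : all (valid_block A) bsR && all (valid_block A) bsB.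
  by rewrite -all_cat; move: valid_bs; rewrite (perm_all _ eq_bs_split) => /andP[].
have eq_tiles : perm_eq (1 :: rest) ((rem v b0 ++ flatten bsR) ++ flatten bsB).
  rewrite -(perm_cons v) -catA -cat_cons.
  apply: (@perm_trans _ (b0 ++ flatten bsR ++ flatten bsB)); last first.
    by rewrite perm_cat2r perm_to_rem.
  apply: (@perm_trans _ (1 :: p)); first by rewrite (perm_catCA [:: v] [:: 1]) perm_cons perm_sym.
  rewrite -flatten_cat -[b0 ++ _]/(flatten (b0 :: _)); rewrite perm_sym in eq_bs.
  exact: perm_trans eq_bs (perm_flatten eq_bs_split).
have merge_B := merges_flatten valid_bsB.
have [eq_rest | [bsB_1 eq_rest]] := perm_cons_catP eq_tiles.
  exact: coarse_reachable_merges (sim_rest _ _ eq_rest) merge_B.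
apply: coarse_reachable_add1 (sim_rest _ _ eq_rest) _ _.
  exact: merges_perm (perm_to_rem bsB_1) (perm_refl _) merge_B.
move: lt_qn; rewrite -(perm_size eq_q) size_map (perm_size eq_bs_split) /= size_cat size_map.
lia.
Qed.

Lemma agg_reachable_first_tile_split n A q :
  agg_reachable n A q -> size q < n -> q != [::] -> first_tile_split n A q.
Proof.
elim=> [//|p {}q reach_p IHp /agg_stepE[lt_pn merge_pq]] lt_qn _.
have [p_nil | ne_p] := eqVneq p [::]; last first.
  exact: first_tile_split_step (IHp lt_pn ne_p) merge_pq lt_qn.
move: lt_qn (merges_size merge_pq) (merges_sumn merge_pq); rewrite {}p_nil.
by case: q {merge_pq} => [|a [|//]] //= lt_1n _; rewrite addn0 => ->; apply: first_tile_split1.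
Qed.

Lemma agg_reachable_drop_tile n A q : agg_reachable n A q -> size q < n -> q != [::] ->
  exists v rest, perm_eq q (v :: rest) /\
    forall k, k <= (sumn rest).+1 -> exists2 Q, agg_reachable n.-1 A Q & sumn Q = k.
Proof.
move=> reach_q lt_qn ne_q.
have [v [rest [eq_q sim_rest]]] := agg_reachable_first_tile_split reach_q lt_qn ne_q.
exists v, rest; split=> // k le_k.
have [Q [reach_Q lt_Qn merge_Q]] := sim_rest [::] rest (perm_refl _).
apply: agg_reachable_sumn_le (agg_reach_step reach_Q (agg_step_add1 A lt_Qn)) _.
by rewrite /= -(merges_sumn merge_Q) add1n.
Qed.

Lemma agg_reachable1_totals n (A : pred nat) x : A 1 -> 1 < x -> agg_reachable n A [:: x] ->
  exists2 v, A v /\ v < x &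
    forall k, k + v <= x -> exists2 Q, agg_reachable n.-1 A Q & sumn Q = k.
Proof.
move=> A1 lt1x reach_x.
have [p reach_p step_px] := agg_reachable_inv reach_x (isT : [:: x] != [::]).
have /agg_stepE[lt_pn _] := step_px; have /= := agg_step_sumn step_px.
rewrite addn0 => sumn_px; have ne_p : p != [::].
  by apply: contraTneq lt1x => p_nil; rewrite sumn_px p_nil.
have [v [rest [eq_p totals]]] := agg_reachable_drop_tile reach_p lt_pn ne_p.
rewrite (perm_sumn eq_p) /= in sumn_px; exists v => [|k le_k]; last by apply: totals; lia.
split; last by lia.
by apply: (allP (agg_reachable_all A1 reach_p)); rewrite (perm_mem eq_p) mem_head.
Qed.

Lemma agg_reachable1_merge n A y p : agg_reachable n A [:: y] -> agg_reachable n.-1 A p ->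
  p != [::] -> A (y + sumn p) -> agg_reachable n A [:: y + sumn p].
Proof.
move=> reach_y reach_p ne_p A_yp.
have [p' reach_p' step_p'p] := agg_reachable_inv reach_p ne_p.
have /agg_stepE[lt_yp'n merge_yp] := agg_step_cons y step_p'p.
apply: agg_reach_step (agg_reachable_cons reach_y reach_p') _; apply/agg_stepE; split=> //.
by apply: merges_trans merge_yp (merges_one _); rewrite /valid_block A_yp implybT.
Qed.

Theorem lemma2 (A : pred nat) (hApos : forall a, A a -> 0 < a) (hA1 : A 1)
    (x y n : nat) (hx : A x) (hx1 : 1 < x)
    (hy : A y) (hyx : y < x) (hymax : forall z, A z -> z < x -> z <= y)
    (hn : 1 <= n) :
  agg_reachable n A [:: x] <->
  (agg_reachable n A [:: y] /\
   exists p, agg_reachable n.-1 A p /\ total_value p = x - y).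
Proof.
rewrite /total_value; split=> [reach_x | [reach_y [p [reach_p sumn_p]]]].
  split.
    have le_yx : y <= sumn [:: x] by rewrite /= addn0 ltnW.
    have [q reach_q sumn_q] := agg_reachable_sumn_le reach_x le_yx.
    by rewrite -sumn_q; apply: agg_reachable_merge_all => //; rewrite sumn_q ?hApos.
  have [v [A_v lt_vx] totals] := agg_reachable1_totals hA1 hx1 reach_x.
  have le_vy := hymax v A_v lt_vx.
  have [Q reach_Q sumn_Q] := totals (x - y) (ltac:(lia)).
  by exists Q.
have ne_p : p != [::] by apply: contraTneq hyx => p_nil; rewrite -leqNgt -subn_eq0 -sumn_p p_nil.
have sumn_yp : y + sumn p = x by rewrite sumn_p subnKC // ltnW.
by rewrite -sumn_yp; apply: agg_reachable1_merge; rewrite ?sumn_yp.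
Qed.
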